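(* Let $F\colon \mathcal{D}_1 \to \mathcal{D}_2$ be a symmetric monoidal dagger functor between fermionically dagger compact categories such that every iso-positive involution in $\mathcal{D}_2$ is the identity. Then $F$ is $B\mathbb{Z}/2$-equivariant, i.e. $F((-1)^F_{x}) = (-1)^F_{F(x)}$ for every object $x$ of $\mathcal{D}_1$.
   Context: A dagger category is a category $\mathcal{D}$ with a contravariant strict involution $\dagger\colon \mathcal{D}\to\mathcal{D}^{\mathrm{op}}$ that is the identity on objects. A symmetric monoidal dagger category is a dagger category that is also symmetric monoidal such that $\otimes$ is a $\dagger$-functor and the unitors, associator and braiding $\sigma$ are unitary ($f^\dagger=f^{-1}$). A symmetric monoidal dagger functor is a symmetric monoidal functor $F$ that is a dagger functor ($F(f^\dagger)=F(f)^\dagger$) and whose structure isomorphisms $F(c_1)\otimes F(c_2)\to F(c_1\otimes c_2)$ and $1\to F(1)$ are unitary. Each $\mathcal{D}_i$ comes with a unitary monoidal $B\mathbb{Z}/2$-action, i.e. a monoidal natural involution $(-1)^F\colon \mathrm{id}\Rightarrow \mathrm{id}$ of the identity functor with each component unitary. An endomorphism $f\colon c\to c$ is iso-positive if $f=g^\dagger g$ for some isomorphism $g\colon c\to c'$. A symmetric monoidal dagger category $\mathcal{D}$ with such a $B\mathbb{Z}/2$-action is fermionically dagger compact if it has duals and, for every object $x$, the standard dual functor of its Hermitian completion sends $x$ (with trivial Hermitian pairing) to a dual whose dual Hermitian pairing, after twisting by $(-1)^F_{x^*}$, is again iso-positive; equivalently (as stated in the paper), every object $x$ admits a duality $\mathrm{ev}_x\colon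 x^*\otimes x\to 1$, $\mathrm{coev}_x\colon 1\to x\otimes x^*$ such that $\sigma_{x^*,x}\circ \mathrm{ev}_x^\dagger = ((-1)^F_x\otimes \mathrm{id}_{x^*})\circ \mathrm{coev}_x$. *)

(** A symmetric monoidal dagger category equipped with a unitary monoidal
    BZ/2-action (-1)^F (field [par]).  Morphisms are compared with Leibniz
    equality. *)
Record SMDC : Type := {
  ob : Type;
  hom : ob -> ob -> Type;
  idm : forall a, hom a a;
  comp : forall {a b c}, hom b c -> hom a b -> hom a c;
  comp_id_l : forall a b (f : hom a b), comp (idm b) f = f;
  comp_id_r : forall a b (f : hom a b), comp f (idm a) = f;
  comp_assoc : forall a b c d (f : hom a b) (g : hom b c) (h : hom c d),
      comp h (comp g f) = comp (comp h g) f;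
  dag : forall {a b}, hom a b -> hom b a;
  dag_invol : forall a b (f : hom a b), dag (dag f) = f;
  dag_comp : forall a b c (f : hom a b) (g : hom b c),
      dag (comp g f) = comp (dag f) (dag g);
  dag_id : forall a, dag (idm a) = idm a;
  tens : ob -> ob -> ob;
  tensm : forall {a b c d}, hom a b -> hom c d -> hom (tens a c) (tens b d);
  tens_id : forall a b, tensm (idm a) (idm b) = idm (tens a b);
  tens_comp : forall a b c a' b' c' (f : hom a b) (f' : hom b c)
      (g : hom a' b') (g' : hom b' c'),
      tensm (comp f' f) (comp g' g) = comp (tensm f' g') (tensm f g);
  dag_tens : forall a b c d (f : hom a b) (g : hom c d),
      dag (tensm f g) = tensm (dag f) (dag g);
  unit : ob;
  lam : forall a, hom (tens unit a) a;
  rho : forall a, hom (tens a unit) a;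
  asc : forall a b c, hom (tens (tens a b) c) (tens a (tens b c));
  sym : forall a b, hom (tens a b) (tens b a);
  lam_unitary_l : forall a, comp (dag (lam a)) (lam a) = idm _;
  lam_unitary_r : forall a, comp (lam a) (dag (lam a)) = idm _;
  rho_unitary_l : forall a, comp (dag (rho a)) (rho a) = idm _;
  rho_unitary_r : forall a, comp (rho a) (dag (rho a)) = idm _;
  asc_unitary_l : forall a b c, comp (dag (asc a b c)) (asc a b c) = idm _;
  asc_unitary_r : forall a b c, comp (asc a b c) (dag (asc a b c)) = idm _;
  sym_unitary_l : forall a b, comp (dag (sym a b)) (sym a b) = idm _;
  sym_unitary_r : forall a b, comp (sym a b) (dag (sym a b)) = idm _;
  lam_nat : forall a b (f : hom a b),
      comp (lam b) (tensm (idm unit) f) = comp f (lam a);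
  rho_nat : forall a b (f : hom a b),
      comp (rho b) (tensm f (idm unit)) = comp f (rho a);
  asc_nat : forall a b c a' b' c' (f : hom a a') (g : hom b b') (h : hom c c'),
      comp (asc a' b' c') (tensm (tensm f g) h)
      = comp (tensm f (tensm g h)) (asc a b c);
  sym_nat : forall a b c d (f : hom a b) (g : hom c d),
      comp (sym b d) (tensm f g) = comp (tensm g f) (sym a c);
  triangle : forall a b,
      comp (tensm (idm a) (lam b)) (asc a unit b) = tensm (rho a) (idm b);
  pentagon : forall a b c d,
      comp (asc a b (tens c d)) (asc (tens a b) c d)
      = comp (tensm (idm a) (asc b c d))
             (comp (asc a (tens b c) d) (tensm (asc a b c) (idm d)));
  hexagon : forall a b c,
      comp (asc b c a) (comp (sym a (tens b c)) (asc a b c))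
      = comp (tensm (idm b) (sym a c))
             (comp (asc b a c) (tensm (sym a b) (idm c)));
  sym_invol : forall a b, comp (sym b a) (sym a b) = idm (tens a b);
  (* unitary monoidal BZ/2-action: monoidal natural involution of id *)
  par : forall a, hom a a;
  par_nat : forall a b (f : hom a b), comp (par b) f = comp f (par a);
  par_invol : forall a, comp (par a) (par a) = idm a;
  par_tens : forall a b, par (tens a b) = tensm (par a) (par b);
  par_unit : par unit = idm unit;
  par_unitary_l : forall a, comp (dag (par a)) (par a) = idm a;
  par_unitary_r : forall a, comp (par a) (dag (par a)) = idm a
}.

Arguments idm {C} a : rename.
Arguments comp {C a b c} _ _ : rename.
Arguments dag {C a b} _ : rename.
Arguments tens {C} _ _ : rename.
Arguments tensm {C a b c d} _ _ : rename.
Arguments unit {C} : rename.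
Arguments lam {C} a : rename.
Arguments rho {C} a : rename.
Arguments asc {C} a b c : rename.
Arguments sym {C} a b : rename.
Arguments par {C} a : rename.

Definition is_iso {C : SMDC} {a b : ob C} (g : hom C a b) : Prop :=
  exists h : hom C b a, comp h g = idm a /\ comp g h = idm b.

Definition involution {C : SMDC} {c : ob C} (f : hom C c c) : Prop :=
  comp f f = idm c.

Definition iso_positive {C : SMDC} {c : ob C} (f : hom C c c) : Prop :=
  exists (c' : ob C) (g : hom C c c'), is_iso g /\ f = comp (dag g) g.

(** Fermionic dagger compactness, in the equivalent form stated in the paper:
    every object x admits a duality (ev : x^* ⊗ x -> 1, coev : 1 -> x ⊗ x^* )
    (zigzag identities) such that sigma_{x^*,x} ∘ ev^dagger = ((-1)^F_x ⊗ id) ∘ coev. *)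
Definition fermionically_dagger_compact (C : SMDC) : Prop :=
  forall x : ob C, exists (xs : ob C) (ev : hom C (tens xs x) unit)
                          (coev : hom C unit (tens x xs)),
    comp (rho x) (comp (tensm (idm x) ev)
        (comp (asc x xs x) (comp (tensm coev (idm x)) (dag (lam x))))) = idm x
    /\ comp (lam xs) (comp (tensm ev (idm xs))
        (comp (dag (asc xs x xs)) (comp (tensm (idm xs) coev) (dag (rho xs)))))
       = idm xs
    /\ comp (sym xs x) (dag ev) = comp (tensm (par x) (idm xs)) coev.

Record SMDFunctor (C D : SMDC) : Type := {
  fo : ob C -> ob D;
  fm : forall {a b : ob C}, hom C a b -> hom D (fo a) (fo b);
  fm_id : forall a, fm (idm a) = idm (fo a);
  fm_comp : forall a b c (f : hom C a b) (g : hom C b c),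
      fm (comp g f) = comp (fm g) (fm f);
  fm_dag : forall a b (f : hom C a b), fm (dag f) = dag (fm f);
  mu : forall a b, hom D (tens (fo a) (fo b)) (fo (tens a b));
  eps : hom D unit (fo unit);
  mu_unitary_l : forall a b, comp (dag (mu a b)) (mu a b) = idm _;
  mu_unitary_r : forall a b, comp (mu a b) (dag (mu a b)) = idm _;
  eps_unitary_l : comp (dag eps) eps = idm _;
  eps_unitary_r : comp eps (dag eps) = idm _;
  mu_nat : forall a b c d (f : hom C a b) (g : hom C c d),
      comp (mu b d) (tensm (fm f) (fm g)) = comp (fm (tensm f g)) (mu a c);
  mu_assoc : forall a b c,
      comp (fm (asc a b c)) (comp (mu (tens a b) c) (tensm (mu a b) (idm (fo c))))
      = comp (mu a (tens b c))
             (comp (tensm (idm (fo a)) (mu b c)) (asc (fo a) (fo b) (fo c)));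
  mu_lunit : forall a,
      comp (fm (lam a)) (comp (mu unit a) (tensm eps (idm (fo a)))) = lam (fo a);
  mu_runit : forall a,
      comp (fm (rho a)) (comp (mu a unit) (tensm (idm (fo a)) eps)) = rho (fo a);
  mu_sym : forall a b,
      comp (fm (sym a b)) (mu a b) = comp (mu b a) (sym (fo a) (fo b))
}.

Arguments fo {C D} F _ : rename.
Arguments fm {C D} F {a b} _ : rename.

From Corelib Require Import ssreflect.

(* Applying F to a fermionic duality of x gives a duality of F x whose twist is
   Q := F((-1)^F_x), while D provides a duality of F x with twist
   P := (-1)^F_{F x}.  The canonical isomorphism g between the two duals (the
   mate of one evaluation against the other coevaluation) satisfies, by the two
   twist conditions, g^† g = (Q P)^*, the transpose of Q P.  Since P is natural,
   Q P is an involution, so g^† g is an iso-positive involution, hence the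
   identity; transposition being injective, Q P = id, i.e. Q = P. *)

Local Notation "g ∘ f" := (comp g f) (at level 40, left associativity).
Local Notation "f ⊗ g" := (tensm f g) (at level 35).
Local Notation "f †" := (dag f) (at level 20).

Lemma comp_assocr {C : SMDC} {a b c d} (f : hom C a b) (g : hom C b c) (h : hom C c d) :
  h ∘ g ∘ f = h ∘ (g ∘ f).
Proof. by rewrite comp_assoc. Qed.

Lemma comp_rw2 {C : SMDC} {x y z w} {f : hom C y z} {g : hom C x y} {r : hom C x z} :
  f ∘ g = r -> forall q : hom C w x, f ∘ (g ∘ q) = r ∘ q.
Proof. by move=> fg q; rewrite comp_assoc fg. Qed.

Lemma comp_rw3 {C : SMDC} {x y z u w} {f : hom C y z} {g : hom C x y} {h : hom C u x}
    {r : hom C u z} :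
  f ∘ (g ∘ h) = r -> forall q : hom C w u, f ∘ (g ∘ (h ∘ q)) = r ∘ q.
Proof. by move=> fgh q; rewrite -fgh !comp_assoc. Qed.

(* [rw t] rewrites with an equation [t] (of any arity) whose left-hand side is a
   composite of up to three morphisms, inside right-associated composites;
   [rwr t] rewrites right to left. *)
Ltac rw_upto n t :=
  match n with
  | O => fail
  | S ?m => first [ rewrite t | rewrite (comp_rw2 t) | rewrite (comp_rw3 t)
                  | rw_upto m uconstr:(t _) ]
  end.
Ltac rwr_upto n t :=
  match n with
  | O => fail
  | S ?m => first [ rewrite -t | rewrite (comp_rw2 (eq_sym t))
                  | rewrite (comp_rw3 (eq_sym t)) | rwr_upto m uconstr:(t _) ]
  end.
Tactic Notation "rw" uconstr(t) := rw_upto 12 t; rewrite ?comp_assocr.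
Tactic Notation "rwr" uconstr(t) := rwr_upto 12 t; rewrite ?comp_assocr.

Section DaggerMonoidal.
Context {C : SMDC}.

Lemma tensm_comp {a b c a' b' c'} (f : hom C a b) (f' : hom C b c) (g : hom C a' b')
    (g' : hom C b' c') :
  (f' ⊗ g') ∘ (f ⊗ g) = (f' ∘ f) ⊗ (g' ∘ g).
Proof. by rewrite tens_comp. Qed.

Lemma id_tensm_comp {a x y z} (f : hom C x y) (g : hom C y z) :
  idm a ⊗ (g ∘ f) = (idm a ⊗ g) ∘ (idm a ⊗ f).
Proof. by rewrite tensm_comp comp_id_l. Qed.

Lemma comp_tensm_id {a x y z} (f : hom C x y) (g : hom C y z) :
  (g ∘ f) ⊗ idm a = (g ⊗ idm a) ∘ (f ⊗ idm a).
Proof. by rewrite tensm_comp comp_id_l. Qed.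

Lemma tensm_interchange {a b c d} (f : hom C a b) (g : hom C c d) :
  (f ⊗ idm d) ∘ (idm a ⊗ g) = (idm b ⊗ g) ∘ (f ⊗ idm c).
Proof. by rewrite !tensm_comp !comp_id_l !comp_id_r. Qed.

Lemma dag_eq_rinv {a b} (u : hom C a b) (v : hom C b a) :
  u † ∘ u = idm a -> u ∘ v = idm b -> u † = v.
Proof. by move=> uu uv; rewrite -(comp_id_r _ _ _ (u †)) -uv comp_assoc uu comp_id_l. Qed.

Lemma dag_par (a : ob C) : (par a) † = par a.
Proof. exact: dag_eq_rinv (par_unitary_l _ a) (par_invol _ a). Qed.

Lemma unitary_dag_nat {a b c d} (u : hom C a b) (v : hom C c d) (f : hom C a c)
    (g : hom C b d) :
  v † ∘ v = idm _ -> u ∘ u † = idm _ -> v ∘ f = g ∘ u -> v † ∘ g = f ∘ u †.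
Proof.
move=> vv uu vf; transitivity (v † ∘ (g ∘ u) ∘ u †).
- by rewrite !comp_assocr uu comp_id_r.
- by rewrite -vf -(comp_assocr f v) vv comp_id_l.
Qed.

Lemma lam_dag_nat a b (f : hom C a b) : (lam b) † ∘ f = (idm unit ⊗ f) ∘ (lam a) †.
Proof. exact: unitary_dag_nat (lam_unitary_l _ _) (lam_unitary_r _ _) (lam_nat _ _ _ _). Qed.

Lemma rho_dag_nat a b (f : hom C a b) : (rho b) † ∘ f = (f ⊗ idm unit) ∘ (rho a) †.
Proof. exact: unitary_dag_nat (rho_unitary_l _ _) (rho_unitary_r _ _) (rho_nat _ _ _ _). Qed.

Lemma asc_dag_nat a b c a' b' c' (f : hom C a a') (g : hom C b b') (h : hom C c c') :
  (asc a' b' c') † ∘ (f ⊗ (g ⊗ h)) = ((f ⊗ g) ⊗ h) ∘ (asc a b c) †.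
Proof.
exact: unitary_dag_nat (asc_unitary_l _ _ _ _) (asc_unitary_r _ _ _ _) (asc_nat _ _ _ _ _ _ _ _ _ _).
Qed.

Lemma comp_unitary_r_inj {a b c} (f g : hom C b c) (u : hom C a b) :
  u ∘ u † = idm _ -> f ∘ u = g ∘ u -> f = g.
Proof. by move=> uu fg; rewrite -(comp_id_r _ _ _ f) -(comp_id_r _ _ _ g) -uu !comp_assoc fg. Qed.

Lemma comp_unitary_l_inj {a b c} (f g : hom C a b) (u : hom C b c) :
  u † ∘ u = idm _ -> u ∘ f = u ∘ g -> f = g.
Proof. by move=> uu fg; rewrite -(comp_id_l _ _ _ f) -(comp_id_l _ _ _ g) -uu -!comp_assoc fg. Qed.

Lemma tensm_unit_r_inj {a b} (f g : hom C a b) : f ⊗ idm unit = g ⊗ idm unit -> f = g.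
Proof.
move=> fg; rewrite -(comp_id_r _ _ _ f) -(rho_unitary_r _ a) comp_assoc -rho_nat fg.
by rewrite rho_nat -comp_assoc rho_unitary_r comp_id_r.
Qed.

Lemma tensm_unit_l_inj {a b} (f g : hom C a b) : idm unit ⊗ f = idm unit ⊗ g -> f = g.
Proof.
move=> fg; rewrite -(comp_id_r _ _ _ f) -(lam_unitary_r _ a) comp_assoc -lam_nat fg.
by rewrite lam_nat -comp_assoc lam_unitary_r comp_id_r.
Qed.

Lemma lam_tens (b c : ob C) : lam (tens b c) ∘ asc unit b c = lam b ⊗ idm c.
Proof.
apply: tensm_unit_l_inj.
have asc_tens_id_unitary (a b' c' d : ob C) :
    (asc a b' c' ⊗ idm d) ∘ (asc a b' c' ⊗ idm d) † = idm _.
  by rewrite dag_tens dag_id tensm_comp asc_unitary_r comp_id_l tens_id.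
apply: (comp_unitary_r_inj _ _ (asc unit (tens unit b) c)); first exact: asc_unitary_r.
apply: (comp_unitary_r_inj _ _ (asc unit unit b ⊗ idm c)); first exact: asc_tens_id_unitary.
rewrite id_tensm_comp !comp_assocr -(pentagon _ _ _ _ _).
rw triangle.
rewrite -(tens_id _ b c).
rwr asc_nat.
rewrite -triangle comp_tensm_id.
by rw asc_nat.
Qed.

Lemma rho_tens (a b : ob C) : rho (tens a b) = (idm a ⊗ rho b) ∘ asc a b unit.
Proof.
apply: tensm_unit_r_inj.
apply: (comp_unitary_l_inj _ _ (asc a b unit)); first exact: asc_unitary_l.
rewrite -triangle -(tens_id _ a b).
rw asc_nat.
rw pentagon.
rwr id_tensm_comp.
rewrite triangle.
rwr asc_nat.
by rwr comp_tensm_id.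
Qed.

Lemma lam_unit : lam (@unit C) = rho unit.
Proof.
have lam_unit_tens (b : ob C) : lam (tens unit b) = idm unit ⊗ lam b.
  apply: (comp_unitary_l_inj _ _ (lam b)); first exact: lam_unitary_l.
  by rewrite lam_nat.
by apply: tensm_unit_r_inj; rewrite -lam_tens -triangle lam_unit_tens.
Qed.

Lemma triangle_dag (a b : ob C) :
  asc a unit b ∘ ((rho a) † ⊗ idm b) = idm a ⊗ (lam b) †.
Proof.
rewrite -(dag_id _ b) -dag_tens -triangle dag_comp dag_tens dag_id.
by rewrite comp_assoc asc_unitary_r comp_id_l.
Qed.

Lemma rho_tens_dag (a b : ob C) : idm a ⊗ (rho b) † = asc a b unit ∘ (rho (tens a b)) †.
Proof. by rewrite rho_tens dag_comp dag_tens dag_id comp_assoc asc_unitary_r comp_id_l. Qed.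

Lemma lam_tens_dag (b c : ob C) :
  (asc unit b c) † ∘ (lam (tens b c)) † = (lam b) † ⊗ idm c.
Proof. by rewrite -dag_comp lam_tens dag_tens dag_id. Qed.

Lemma pentagon_dag (a b c d : ob C) :
  (idm a ⊗ (asc b c d) †) ∘ asc a b (tens c d)
  = asc a (tens b c) d ∘ ((asc a b c ⊗ idm d) ∘ (asc (tens a b) c d) †).
Proof.
rewrite -[LHS]comp_id_r -(asc_unitary_r _ (tens a b) c d) !comp_assocr.
rw pentagon.
rwr id_tensm_comp.
by rewrite asc_unitary_l tens_id comp_id_l.
Qed.

End DaggerMonoidal.

Section Mates.
Context {C : SMDC} {a : ob C}.

Definition zigzag_l {z : ob C} (e : hom C (tens z a) unit) (c : hom C unit (tens a z)) : Prop :=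
  rho a ∘ ((idm a ⊗ e) ∘ (asc a z a ∘ ((c ⊗ idm a) ∘ (lam a) †))) = idm a.

(* For a duality (e, c) of [a] with dual [z], [mate c e = idm z] is the second
   zigzag identity. *)
Definition mate {U V : ob C} (w : hom C unit (tens a V)) (m : hom C (tens U a) unit) :
    hom C U V :=
  lam V ∘ ((m ⊗ idm V) ∘ ((asc U a V) † ∘ ((idm U ⊗ w) ∘ (rho U) †))).

Lemma mate_comp {U U' V : ob C} (w : hom C unit (tens a V)) (m : hom C (tens U a) unit)
    (u : hom C U' U) :
  mate w (m ∘ (u ⊗ idm a)) = mate w m ∘ u.
Proof.
rewrite /mate !comp_assocr.
rw rho_dag_nat.
rwr tensm_interchange.
rewrite -(tens_id _ a V).
rw asc_dag_nat.
by rw tensm_comp; rewrite comp_id_l.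
Qed.

Definition dualm {z : ob C} (e : hom C (tens z a) unit) (c : hom C unit (tens a z))
    (f : hom C a a) : hom C z z :=
  mate c (e ∘ (idm z ⊗ f)).

Section Duality.
Context {z : ob C} {e : hom C (tens z a) unit} {c : hom C unit (tens a z)}.
Hypothesis zl : zigzag_l e c.

Lemma zigzag_l_tens (U : ob C) :
  rho (tens U a) ∘ ((idm (tens U a) ⊗ e) ∘ (asc (tens U a) z a ∘ (((asc U a z) † ⊗ idm a)
     ∘ (((idm U ⊗ c) ⊗ idm a) ∘ ((rho U) † ⊗ idm a))))) = idm _.
Proof.
rewrite rho_tens comp_assocr -(tens_id _ U a).
rw asc_nat.
rw pentagon.
rwr (comp_tensm_id (a:=a) ((asc U a z) †) (asc U a z)).
rewrite asc_unitary_r tens_id comp_id_l.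
rw asc_nat.
rewrite triangle_dag.
do 4 rwr id_tensm_comp.
by rewrite zl tens_id.
Qed.

Lemma ev_mate {U : ob C} (m : hom C (tens U a) unit) : e ∘ (mate c m ⊗ idm a) = m.
Proof.
rewrite /mate !comp_tensm_id -lam_tens !comp_assocr.
rwr lam_nat.
rw asc_nat.
rewrite tens_id.
rwr tensm_interchange.
rewrite lam_unit.
rw rho_nat.
by rewrite zigzag_l_tens comp_id_r.
Qed.

Lemma mate_coev {V : ob C} (w : hom C unit (tens a V)) : (idm a ⊗ mate w e) ∘ c = w.
Proof.
rewrite /mate !id_tensm_comp !comp_assocr rho_tens_dag !comp_assocr.
rw rho_dag_nat.
rwr asc_nat.
rewrite tens_id.
rwr tensm_interchange.
rewrite -lam_unit.
rwr lam_dag_nat.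
rw pentagon_dag.
rewrite -(tens_id _ a V).
rw asc_dag_nat.
rw lam_tens_dag.
rwr asc_nat.
rw triangle.
do 4 rwr comp_tensm_id.
by rewrite zl tens_id comp_id_l.
Qed.

Lemma ev_whisker_inj (f g : hom C a a) :
  e ∘ (idm z ⊗ f) = e ∘ (idm z ⊗ g) -> f = g.
Proof.
have expand (h : hom C a a) :
    rho a ∘ ((idm a ⊗ (e ∘ (idm z ⊗ h))) ∘ (asc a z a ∘ ((c ⊗ idm a) ∘ (lam a) †))) = h.
  transitivity ((rho a ∘ ((idm a ⊗ e) ∘ (asc a z a ∘ ((c ⊗ idm a) ∘ (lam a) †)))) ∘ h);
    last by rewrite zl comp_id_l.
  rewrite !comp_assocr.
  rw lam_dag_nat.
  rw tensm_interchange.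
  rewrite -(tens_id _ a z).
  rw asc_nat.
  by rwr id_tensm_comp.
by move=> fg; rewrite -(expand f) fg expand.
Qed.

Hypothesis zr : mate c e = idm z.

Lemma mate_ev {U : ob C} (k : hom C U z) : mate c (e ∘ (k ⊗ idm a)) = k.
Proof. by rewrite mate_comp zr comp_id_l. Qed.

Lemma dualm_comp (f g : hom C a a) : dualm e c f ∘ dualm e c g = dualm e c (g ∘ f).
Proof.
rewrite /dualm -mate_comp comp_assocr -tensm_interchange -comp_assocr ev_mate.
by rewrite comp_assocr -id_tensm_comp.
Qed.

Lemma dualm_id : dualm e c (idm a) = idm z.
Proof. by rewrite /dualm tens_id comp_id_r. Qed.

Lemma dualm_inj (f g : hom C a a) : dualm e c f = dualm e c g -> f = g.
Proof.
move=> fg; apply: ev_whisker_inj.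
by rewrite -(ev_mate (e ∘ (idm z ⊗ f))) -/(dualm e c f) fg ev_mate.
Qed.

End Duality.

Lemma mate_mate (z1 z2 : ob C) (e1 : hom C (tens z1 a) unit) (c1 : hom C unit (tens a z1))
    (e2 : hom C (tens z2 a) unit) (c2 : hom C unit (tens a z2)) :
  zigzag_l e1 c1 -> mate c2 e2 = idm z2 -> mate c2 e1 ∘ mate c1 e2 = idm z2.
Proof. by move=> zl1 zr2; rewrite -mate_comp ev_mate. Qed.

End Mates.

Section TwistedDualities.
Context {C : SMDC} {a : ob C}.

Section Twist.
Context {t : hom C a a} {z : ob C} {e : hom C (tens z a) unit} {c : hom C unit (tens a z)}.
Hypothesis tw : sym z a ∘ e † = (t ⊗ idm z) ∘ c.

Lemma ev_dag_twist : e † = sym a z ∘ ((t ⊗ idm z) ∘ c).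
Proof. by rewrite -tw comp_assoc sym_invol comp_id_l. Qed.

Lemma coev_twist : t ∘ t = idm a -> c = (t ⊗ idm z) ∘ (sym z a ∘ e †).
Proof. by move=> tt; rewrite tw comp_assoc tensm_comp tt comp_id_l tens_id comp_id_l. Qed.

End Twist.

Context {P Q : hom C a a}.
Hypotheses (PP : P ∘ P = idm a) (QQ : Q ∘ Q = idm a) (PQ : P ∘ Q = Q ∘ P).
Hypotheses (Pdag : P † = P) (Qdag : Q † = Q).
Context {z1 : ob C} {e1 : hom C (tens z1 a) unit} {c1 : hom C unit (tens a z1)}.
Hypotheses (zl1 : zigzag_l e1 c1) (zr1 : mate c1 e1 = idm z1).
Hypothesis tw1 : sym z1 a ∘ e1 † = (Q ⊗ idm z1) ∘ c1.
Context {z2 : ob C} {e2 : hom C (tens z2 a) unit} {c2 : hom C unit (tens a z2)}.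
Hypotheses (zl2 : zigzag_l e2 c2) (zr2 : mate c2 e2 = idm z2).
Hypothesis tw2 : sym z2 a ∘ e2 † = (P ⊗ idm z2) ∘ c2.

Lemma mate_is_iso : is_iso (mate c1 e2).
Proof. by exists (mate c2 e1); split; apply: mate_mate. Qed.

Lemma mate_ev_dag :
  (mate c1 e2 ⊗ idm a) ∘ e2 † = (idm z1 ⊗ (P ∘ Q)) ∘ e1 †.
Proof.
rewrite (ev_dag_twist tw2).
rwr sym_nat.
rwr tensm_interchange.
rw (mate_coev zl2).
rewrite (coev_twist tw1 QQ).
rw tensm_comp.
rewrite comp_id_l.
rw sym_nat.
by rw sym_invol; rewrite comp_id_l.
Qed.

Lemma dag_mate : (mate c1 e2) † = mate c2 (e1 ∘ (idm z1 ⊗ (Q ∘ P))).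
Proof.
rewrite -[LHS](mate_ev zr2); congr (mate c2 _).
transitivity (((mate c1 e2 ⊗ idm a) ∘ e2 †) †);
  first by rewrite dag_comp dag_tens dag_id dag_invol.
rewrite mate_ev_dag.
by rewrite dag_comp dag_tens dag_id dag_invol dag_comp Pdag Qdag.
Qed.

Lemma dag_mate_mate : (mate c1 e2) † ∘ mate c1 e2 = dualm e2 c2 (Q ∘ P).
Proof.
rewrite dag_mate -mate_comp /dualm comp_assocr -tensm_interchange -comp_assocr.
by rewrite ev_mate.
Qed.

Lemma twist_unique :
  (forall (c : ob C) (f : hom C c c), involution f -> iso_positive f -> f = idm c) ->
  Q = P.
Proof.
move=> hpos.
have QP_invol : (Q ∘ P) ∘ (Q ∘ P) = idm a.
  by rewrite comp_assocr -(comp_assocr P Q P) PQ comp_assocr PP comp_id_r QQ.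
have dualm_QP : dualm e2 c2 (Q ∘ P) = idm z2.
  apply: hpos; first by rewrite /involution (dualm_comp zl2) QP_invol dualm_id.
  by exists z1, (mate c1 e2); split; [exact: mate_is_iso | rewrite dag_mate_mate].
have QP_id : Q ∘ P = idm a.
  by apply: (dualm_inj zl2); rewrite dualm_QP dualm_id.
by rewrite -(comp_id_r _ _ _ Q) -PP comp_assoc QP_id comp_id_l.
Qed.

End TwistedDualities.

Section Transport.
Context {C D : SMDC} (F : SMDFunctor C D).

Lemma fm_lam (a : ob C) :
  fm F (lam a) = lam (fo F a) ∘ (((eps _ _ F) † ⊗ idm (fo F a)) ∘ (mu _ _ F unit a) †).
Proof.
rewrite -(mu_lunit _ _ F a) !comp_assocr.
rw tensm_comp.
by rewrite eps_unitary_r comp_id_l tens_id comp_id_l mu_unitary_r comp_id_r.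
Qed.

Lemma fm_rho (a : ob C) :
  fm F (rho a) = rho (fo F a) ∘ ((idm (fo F a) ⊗ (eps _ _ F) †) ∘ (mu _ _ F a unit) †).
Proof.
rewrite -(mu_runit _ _ F a) !comp_assocr.
rw tensm_comp.
by rewrite eps_unitary_r comp_id_l tens_id comp_id_l mu_unitary_r comp_id_r.
Qed.

Lemma fm_asc (a b c : ob C) :
  fm F (asc a b c)
  = mu _ _ F a (tens b c) ∘ ((idm (fo F a) ⊗ mu _ _ F b c) ∘ (asc (fo F a) (fo F b) (fo F c)
      ∘ (((mu _ _ F a b) † ⊗ idm (fo F c)) ∘ (mu _ _ F (tens a b) c) †))).
Proof.
transitivity (fm F (asc a b c) ∘ (mu _ _ F (tens a b) c ∘ ((mu _ _ F a b ⊗ idm (fo F c))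
   ∘ (((mu _ _ F a b) † ⊗ idm (fo F c)) ∘ (mu _ _ F (tens a b) c) †)))).
  rw tensm_comp.
  by rewrite mu_unitary_r comp_id_l tens_id comp_id_l mu_unitary_r comp_id_r.
by rw mu_assoc.
Qed.

Lemma fm_tensm {a b c d : ob C} (f : hom C a b) (g : hom C c d) :
  fm F (f ⊗ g) = mu _ _ F b d ∘ ((fm F f ⊗ fm F g) ∘ (mu _ _ F a c) †).
Proof. by rw mu_nat; rewrite mu_unitary_r comp_id_r. Qed.

Lemma sym_mu_dag (a b : ob C) :
  sym (fo F a) (fo F b) ∘ (mu _ _ F a b) † = (mu _ _ F b a) † ∘ fm F (sym a b).
Proof.
symmetry; apply: unitary_dag_nat; [exact: mu_unitary_l | exact: mu_unitary_r |].
by rewrite mu_sym.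
Qed.

Context {x xs : ob C}.

Definition fm_ev (ev : hom C (tens xs x) unit) : hom D (tens (fo F xs) (fo F x)) unit :=
  (eps _ _ F) † ∘ (fm F ev ∘ mu _ _ F xs x).

Definition fm_coev (coev : hom C unit (tens x xs)) : hom D unit (tens (fo F x) (fo F xs)) :=
  (mu _ _ F x xs) † ∘ (fm F coev ∘ eps _ _ F).

Context {ev : hom C (tens xs x) unit} {coev : hom C unit (tens x xs)}.

Lemma fm_zigzag_l : zigzag_l ev coev -> zigzag_l (fm_ev ev) (fm_coev coev).
Proof.
move=> /(f_equal (fm F)) zl.
rewrite !fm_comp !fm_dag fm_id fm_rho fm_asc !fm_tensm fm_lam !fm_id in zl.
rewrite !dag_comp !dag_tens !dag_invol !dag_id ?comp_assocr in zl.
rewrite /zigzag_l /fm_ev /fm_coev !id_tensm_comp !comp_tensm_id ?comp_assocr -[RHS]zl.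
by repeat (rw mu_unitary_l; rewrite ?comp_id_l).
Qed.

Lemma fm_zigzag_r : mate coev ev = idm xs -> mate (fm_coev coev) (fm_ev ev) = idm (fo F xs).
Proof.
move=> /(f_equal (fm F)) zr.
rewrite !fm_comp !fm_dag fm_id fm_rho fm_asc !fm_tensm fm_lam !fm_id in zr.
rewrite !dag_comp !dag_tens !dag_invol !dag_id ?comp_assocr in zr.
rewrite /mate /fm_ev /fm_coev !id_tensm_comp !comp_tensm_id ?comp_assocr -[RHS]zr.
by repeat (rw mu_unitary_l; rewrite ?comp_id_l).
Qed.

Lemma fm_twist {t : hom C x x} :
  sym xs x ∘ ev † = (t ⊗ idm xs) ∘ coev ->
  sym (fo F xs) (fo F x) ∘ (fm_ev ev) † = (fm F t ⊗ idm (fo F xs)) ∘ fm_coev coev.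
Proof.
move=> tw; rewrite /fm_ev /fm_coev !dag_comp dag_invol !comp_assocr.
rw sym_mu_dag.
rewrite -fm_dag.
rwr fm_comp.
rewrite tw fm_comp fm_tensm fm_id !comp_assocr.
by rw mu_unitary_l; rewrite comp_id_l.
Qed.

End Transport.

Theorem mainTheorem3 (C D : SMDC) (F : SMDFunctor C D)
  (hC : fermionically_dagger_compact C)
  (hD : fermionically_dagger_compact D)
  (hpos : forall (c : ob D) (f : hom D c c),
            involution f -> iso_positive f -> f = idm c) :
  forall x : ob C, fm F (par x) = par (fo F x).
Proof.
move=> x.
have [xs [ev [coev [zl [zr tw]]]]] := hC x.
have [ys [e [c [zl' [zr' tw']]]]] := hD (fo F x).
have Fpar_invol : fm F (par x) ∘ fm F (par x) = idm (fo F x).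
  by rewrite -fm_comp par_invol fm_id.
have Fpar_dag : (fm F (par x)) † = fm F (par x) by rewrite -fm_dag dag_par.
exact: (twist_unique (par_invol _ _) Fpar_invol (par_nat _ _ _ _) (dag_par _) Fpar_dag
  (fm_zigzag_l F zl) (fm_zigzag_r F zr) (fm_twist F tw) zl' zr' tw' hpos).
Qed.
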